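(* Let $n,g,k$ be integers with $k\ge 1$ and $2\leq g\leq \left\lfloor \frac{n-k-2}{2}\right\rfloor$, with $(n-k)g$ even. Let $F_1,F_2$ be two connected $g$-regular graphs with $|V(F_1)|+|V(F_2)|=n-k$, and let $K_{1,k-1}$ be a star with center $v$. Let $F^k_n$ be a graph obtained from the disjoint union of $F_1$, $F_2$ and $K_{1,k-1}$ by adding exactly one edge from $v$ to $F_1$ and exactly one edge from $v$ to $F_2$. Then $\kappa^g(F^k_n)=k$.
   Context: For a connected graph $G=(V,E)$ and integer $g\ge0$: a set $F\subseteq V$ is a $g$-good-neighbor faulty set if $|N(v)\cap (V-F)|\geq g$ for every $v\in V-F$; a $g$-good-neighbor cut is such an $F$ with $G-F$ disconnected; $\kappa^g(G)$ is the minimum cardinality of a $g$-good-neighbor cut. *)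

From mathcomp Require Import all_boot.
Set Implicit Arguments. Unset Strict Implicit. Unset Printing Implicit Defensive.

Definition simple_graph (T : finType) (e : rel T) : Prop :=
  symmetric e /\ irreflexive e.

Definition connected_graph (T : finType) (e : rel T) : Prop :=
  forall x y : T, connect e x y.

Definition nbhd (T : finType) (e : rel T) (x : T) : {set T} := [set y | e x y].

Definition regular (T : finType) (e : rel T) (g : nat) : Prop :=
  forall x : T, #|nbhd e x| = g.

Definition induced_rel (T : finType) (e : rel T) (S : {set T}) : rel T :=
  [rel x y | [&& e x y, x \in S & y \in S]].

Definition connected_on (T : finType) (e : rel T) (S : {set T}) : Prop :=
  forall x y, x \in S -> y \in S -> connect (induced_rel e S) x y.

Definition good_neighbor_faulty (T : finType) (e : rel T) (g : nat) (F : {set T}) : Prop :=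
  forall v, v \notin F -> g <= #|nbhd e v :&: ~: F|.

Definition good_neighbor_cut (T : finType) (e : rel T) (g : nat) (F : {set T}) : Prop :=
  good_neighbor_faulty e g F /\ ~ connected_on e (~: F).

Definition kappa_g_eq (T : finType) (e : rel T) (g m : nat) : Prop :=
  (exists F : {set T}, good_neighbor_cut e g F /\ #|F| = m) /\
  (forall F : {set T}, good_neighbor_cut e g F -> m <= #|F|).

(* The graph F^k_n: vertices V(F1) + V(F2) + star K_{1,k-1};
   the star has center [inr None] and leaves [inr (Some i)], i : 'I_(k-1);
   extra edges: center -- a (a in F1) and center -- b (b in F2). *)
Definition Fkn_vertex (T1 T2 : finType) (k : nat) : finType :=
  ((T1 + T2) + option 'I_(k.-1))%type.

Arguments Fkn_vertex : clear implicits.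
Definition Fkn_rel (T1 T2 : finType) (e1 : rel T1) (e2 : rel T2) (k : nat)
    (a : T1) (b : T2) : rel (Fkn_vertex T1 T2 k) :=
  fun x y =>
  match x, y with
  | inl (inl u), inl (inl w) => e1 u w
  | inl (inr u), inl (inr w) => e2 u w
  | inr None, inr (Some _) => true
  | inr (Some _), inr None => true
  | inr None, inl (inl u) => u == a
  | inl (inl u), inr None => u == a
  | inr None, inl (inr u) => u == b
  | inl (inr u), inr None => u == b
  | _, _ => false
  end.
Arguments Fkn_rel [T1 T2] e1 e2 k a b.

From mathcomp Require Import all_boot.

Set Implicit Arguments.
Unset Strict Implicit.
Unset Printing Implicit Defensive.

(* The star (its center together with its k-1 leaves) is a g-good cut of size
   k: every vertex of F1 or F2 keeps its g neighbors, and removing the center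
   separates F1 from F2.  Conversely, a leaf has degree 1 < g, so every g-good
   faulty set contains the k-1 leaves; removing the leaves alone leaves the
   graph connected through the center, so a g-good cut contains a further
   vertex.  The hypotheses on n and on the parity of (n-k)g only ensure that
   such graphs F1, F2 exist; the argument does not use them. *)

Lemma connect_homo (A B : finType) (f : A -> B) (eA : rel A) (eB : rel B) :
  {homo f : x y / eA x y >-> eB x y} ->
  {homo f : x y / connect eA x y >-> connect eB x y}.
Proof.
move=> homo_f x _ /connectP[p eA_p ->]; elim: p x eA_p => //= y p IHp x.
by case/andP=> /homo_f/connect1/connect_trans + /IHp; apply.
Qed.

Lemma card_nbhd_homo (A B : finType) (f : A -> B) (eA : rel A) (eB : rel B)
    (X : {set B}) (x : A) :
  injective f -> {homo f : u v / eA u v >-> eB u v} ->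
  (forall u, f u \notin X) ->
  #|nbhd eA x| <= #|nbhd eB (f x) :&: ~: X|.
Proof.
move=> inj_f homo_f fX; rewrite -(card_imset _ inj_f); apply: subset_leq_card.
by apply/subsetP=> _ /imsetP[u + ->]; rewrite !inE fX andbT; apply: homo_f.
Qed.

Section GoodNeighborCuts.

Variables (T : finType) (e : rel T) (g : nat).

Lemma induced_rel_sym (S : {set T}) : symmetric e -> symmetric (induced_rel e S).
Proof. by move=> sym_e x y; rewrite /induced_rel /= sym_e [(x \in S) && _]andbC. Qed.

Lemma connected_on_hub (S : {set T}) (c : T) :
  symmetric e -> c \in S ->
  (forall x, x \in S -> connect (induced_rel e S) x c) -> connected_on e S.
Proof.
move=> /(induced_rel_sym S)/sym_connect_sym sym_eS Sc to_c x y Sx Sy.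
by apply: connect_trans (to_c x Sx) _; rewrite sym_eS to_c.
Qed.

Lemma good_neighbor_faulty_small_degree (F : {set T}) (v : T) :
  good_neighbor_faulty e g F -> #|nbhd e v| < g -> v \in F.
Proof.
move=> gF small_v; apply/negPn/negP=> /gF; apply/negP; rewrite -ltnNge.
exact: leq_ltn_trans (subset_leq_card (subsetIl _ _)) small_v.
Qed.

Lemma good_neighbor_cut_card_gt (L F : {set T}) :
  connected_on e (~: L) -> L \subset F -> good_neighbor_cut e g F ->
  #|L| < #|F|.
Proof.
move=> conn_L LF [_ disc_F]; apply: proper_card; rewrite properEneq LF andbT.
by apply/eqP=> defL; apply: disc_F; rewrite -defL.
Qed.

End GoodNeighborCuts.

Section Fkn.

Variables (T1 T2 : finType) (e1 : rel T1) (e2 : rel T2) (k : nat).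
Variables (a : T1) (b : T2).

Local Notation V := (Fkn_vertex T1 T2 k).
Local Notation e := (Fkn_rel e1 e2 k a b).

Definition Fkn_left (u : T1) : V := inl (inl u).
Definition Fkn_right (u : T2) : V := inl (inr u).
Definition Fkn_center : V := inr None.
Definition Fkn_leaf (i : 'I_k.-1) : V := inr (Some i).

Definition Fkn_star : {set V} := [set x | if x is inr _ then true else false].
Definition Fkn_leaves : {set V} :=
  [set x | if x is inr (Some _) then true else false].

Lemma card_Fkn_star : 0 < k -> #|Fkn_star| = k.
Proof.
move=> k_gt0; have -> : Fkn_star = inr @: [set: option 'I_k.-1].
  by apply/setP=> -[x|o]; rewrite !inE ?imset_f //; apply/esym/imsetP=> -[].
by rewrite card_imset ?cardsT ?card_option ?card_ord ?prednK //; apply: inr_inj.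
Qed.

Lemma card_Fkn_leaves : #|Fkn_leaves| = k.-1.
Proof.
have -> : Fkn_leaves = Fkn_leaf @: [set: 'I_k.-1].
  by apply/setP=> -[x|[i|]]; rewrite !inE ?imset_f //; apply/esym/imsetP=> -[].
by rewrite card_imset ?cardsT ?card_ord // => i j [->].
Qed.

Lemma Fkn_rel_sym : symmetric e1 -> symmetric e2 -> symmetric e.
Proof. by move=> sym1 sym2 [[x|x]|[x|]] [[y|y]|[y|]] //=; rewrite ?sym1 ?sym2. Qed.

Lemma nbhd_Fkn_leaf (i : 'I_k.-1) : nbhd e (Fkn_leaf i) = [set Fkn_center].
Proof. by apply/setP=> -[[y|y]|[y|]]; rewrite !inE. Qed.

Lemma Fkn_star_good_neighbor_faulty (g : nat) :
  regular e1 g -> regular e2 g -> good_neighbor_faulty e g Fkn_star.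
Proof.
move=> reg1 reg2 [[u|u] _|o]; last by rewrite inE.
  rewrite -(reg1 u); apply: (card_nbhd_homo (f := Fkn_left)) => // [x y|x].
    by rewrite /Fkn_left => -[->].
  by rewrite inE.
rewrite -(reg2 u); apply: (card_nbhd_homo (f := Fkn_right)) => // [x y|x].
  by rewrite /Fkn_right => -[->].
by rewrite inE.
Qed.

Lemma Fkn_star_disconnects : ~ connected_on e (~: Fkn_star).
Proof.
pose P := [pred x : V | if x is inl (inl _) then true else false].
have closedP : closed (induced_rel e (~: Fkn_star)) P.
  by move=> [[x|x]|x] [[y|y]|y]; rewrite /induced_rel /= !inE ?andbF.
move=> /(_ (Fkn_left a) (Fkn_right b)); rewrite !inE.
by move=> /(_ isT isT)/(closed_connect closedP).
Qed.

Lemma Fkn_minus_leaves_connect_center (x : V) :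
  connected_graph e1 -> connected_graph e2 -> x \in ~: Fkn_leaves ->
  connect (induced_rel e (~: Fkn_leaves)) x Fkn_center.
Proof.
move=> conn1 conn2; case: x => [[u|u]|[i|]]; rewrite !inE // => _.
- apply: (connect_trans (y := Fkn_left a)).
    apply: (connect_homo (f := Fkn_left)) (conn1 u a) => x y e1xy.
    by rewrite /induced_rel /= e1xy !inE.
  by apply: connect1; rewrite /induced_rel /= eqxx !inE.
- apply: (connect_trans (y := Fkn_right b)).
    apply: (connect_homo (f := Fkn_right)) (conn2 u b) => x y e2xy.
    by rewrite /induced_rel /= e2xy !inE.
  by apply: connect1; rewrite /induced_rel /= eqxx !inE.
Qed.

Lemma Fkn_minus_leaves_connected :
  symmetric e1 -> symmetric e2 -> connected_graph e1 -> connected_graph e2 ->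
  connected_on e (~: Fkn_leaves).
Proof.
move=> sym1 sym2 conn1 conn2.
apply: (connected_on_hub (c := Fkn_center)) (Fkn_rel_sym sym1 sym2) _ _.
  by rewrite !inE.
by move=> x; apply: Fkn_minus_leaves_connect_center.
Qed.

Lemma Fkn_leaves_sub_good_neighbor_faulty (g : nat) (F : {set V}) :
  1 < g -> good_neighbor_faulty e g F -> Fkn_leaves \subset F.
Proof.
move=> g_gt1 gF; apply/subsetP=> -[x|[i|]]; rewrite inE // => _.
by apply: (good_neighbor_faulty_small_degree gF); rewrite nbhd_Fkn_leaf cards1.
Qed.

End Fkn.

Theorem lemma4p1 (n g k : nat) (T1 T2 : finType) (e1 : rel T1) (e2 : rel T2)
    (a : T1) (b : T2) :
  1 <= k ->
  2 <= g -> g <= (n - k - 2) %/ 2 ->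
  ~~ odd ((n - k) * g) ->
  simple_graph e1 -> simple_graph e2 ->
  connected_graph e1 -> connected_graph e2 ->
  regular e1 g -> regular e2 g ->
  #|T1| + #|T2| = n - k ->
  kappa_g_eq (Fkn_rel e1 e2 k a b) g k.
Proof.
move=> k_gt0 g_gt1 _ _ [sym1 _] [sym2 _] conn1 conn2 reg1 reg2 _; split.
  exists (Fkn_star T1 T2 k); split; last exact: card_Fkn_star.
  by split; [apply: Fkn_star_good_neighbor_faulty | apply: Fkn_star_disconnects].
move=> F cutF.
have leavesF := Fkn_leaves_sub_good_neighbor_faulty g_gt1 cutF.1.
have conn_leaves := Fkn_minus_leaves_connected (k := k) a b sym1 sym2 conn1 conn2.
have := good_neighbor_cut_card_gt conn_leaves leavesF cutF.
by rewrite card_Fkn_leaves prednK.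
Qed.
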